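(* Let $A\in\mathbb{M}_n$ and let $\Omega$ be any region contained in $\mathbb{C}\setminus\sigma(A)$. Then for all $z\in\Omega$, \[s_1(R_A(z))<\sup_{\zeta\in\Omega}s_1(R_A(\zeta))\quad\text{and}\quad s_n(R_A(z))>\inf_{\zeta\in\Omega}s_n(R_A(\zeta)).\] In particular, the functions $z\mapsto s_1(R_A(z))$ and $z\mapsto s_n(R_A(z))$ are nonconstant on $\Omega$.
   Context: $\mathbb{M}_n$ is the set of $n\times n$ complex matrices, $\sigma(A)$ is the spectrum (set of eigenvalues) of $A$, and $R_A(z)=(A-zI)^{-1}$ for $z\in\mathbb{C}\setminus\sigma(A)$ is the resolvent. A region is a nonempty open connected subset of $\mathbb{C}$. For $B\in\mathbb{M}_n$, the singular values $s_1(B)\geq\cdots\geq s_n(B)$ are the nonnegative square roots of the eigenvalues of $B^*B$ in nonincreasing order. *)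

From HB Require Import structures.
From mathcomp Require Import all_boot all_order all_algebra.
From mathcomp Require Import all_classical all_reals all_analysis.
From mathcomp Require Export complex.
Import Order.TTheory GRing.Theory Num.Theory.
Import numFieldNormedType.Exports numFieldTopology.Exports.
Set Implicit Arguments. Unset Strict Implicit. Unset Printing Implicit Defensive.
Local Open Scope ring_scope.
Local Open Scope classical_set_scope.
Local Open Scope complex_scope.

(* The metric/topological structure on R[i] induced by its norm (the complex
   modulus), as for any numFieldType (cf. numFieldTopology). *)
#[export] HB.instance Definition _ (R : rcfType) :=
  PseudoPointedMetric.copy R[i] R[i]^o.

Definition adjmx (R : rcfType) n (B : 'M[R[i]]_n) : 'M[R[i]]_n :=
  (map_mx conjc B)^T.

Definition spectrum (R : rcfType) n (A : 'M[R[i]]_n) : set R[i] :=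
  [set z | eigenvalue A z].

Definition resolvent (R : rcfType) n (A : 'M[R[i]]_n) (z : R[i]) : 'M[R[i]]_n :=
  invmx (A - z%:M).

(* eigenvalues of B^* B (all real and nonnegative, B^*B being psd) *)
Definition gram_eigs (R : realType) n (B : 'M[R[i]]_n) : set R :=
  [set x : R | eigenvalue (adjmx B *m B) x%:C].

Definition s_first (R : realType) n (B : 'M[R[i]]_n) : R :=
  Num.sqrt (sup (gram_eigs B)).

Definition s_last (R : realType) n (B : 'M[R[i]]_n) : R :=
  Num.sqrt (inf (gram_eigs B)).

Definition region (R : realType) (O : set R[i]) : Prop :=
  O !=set0 /\ open O /\ connected O.

(* Put L(z) = (A - zI)^* and S(z) = R_A(z)^* = L(z)^-1, so that s_1(R_A(z))^2 and
   s_n(R_A(z))^2 are the extreme values of '[x S(z)] / '[x].  Since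
   L(z + conj k) = L(z) - k, the resolvents at nearby points are related
   algebraically.  If s_1^2 had a local maximum M at z0, attained at a unit
   vector v, put y = v S(z0) and p = y S(z0): then (y + k p) L(z0 + conj k) =
   v - k^2 p, so '[y + k p] <= M '[v - k^2 p] for small k.  Summing over
   k in {t, -t, it, -it}, where both k and k^2 sum to zero, cancels the cross
   terms and leaves 4M + 4t^2 '[p] <= 4M + 4Mt^4 '[p], which forces p = 0 once
   Mt^2 < 1, hence v = 0.  For a local minimum m of s_n^2, y L(z0 - conj k) =
   v + k y gives '[v + k y] <= 1, and summing over k = +-t gives
   2 + 2t^2 m <= 2.  The argument is local: only the openness of Omega is used. *)

From HB Require Import structures.
From mathcomp Require Import all_boot all_order all_algebra.
From mathcomp Require Import all_classical all_reals all_analysis.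
From mathcomp Require Import complex.
From mathcomp Require Import ring lra.
Import Order.TTheory GRing.Theory Num.Theory.
Import numFieldNormedType.Exports numFieldTopology.Exports.
Set Implicit Arguments. Unset Strict Implicit. Unset Printing Implicit Defensive.
Local Open Scope complex_scope.
Local Open Scope ring_scope.
Local Open Scope classical_set_scope.
Local Open Scope sesquilinear_scope.

Local Notation "''[' u , v ]" := (dotmx u v) : ring_scope.
Local Notation "''[' u ]" := '[u, u] : ring_scope.

Section Dotmx.
Variables (C : numClosedFieldType) (m : nat).
Implicit Types (u v : 'rV[C]_m).

Lemma dotmx_mulmxl p u (M : 'M[C]_(m, p)) (w : 'rV[C]_p) :
  '[u *m M, w] = '[u, w *m M^t*].
Proof. by rewrite !dotmxE trmx_mul map_mxM trmxCK mulmxA. Qed.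

Lemma dotmx_eq0 u : ('[u] == 0) = (u == 0).
Proof. exact: dnorm_eq0. Qed.

Lemma dotmx_ge0 u : 0 <= '[u].
Proof. exact: dnorm_ge0. Qed.

Lemma dotmx_gt0 u : (0 < '[u]) = (u != 0).
Proof. exact: dnorm_gt0. Qed.

Lemma dotmx_mulmxr p u (M : 'M[C]_(p, m)) (w : 'rV[C]_p) :
  '[u, w *m M] = '[u *m M^t*, w].
Proof. by rewrite dotmx_mulmxl trmxCK. Qed.

Lemma trmxC_sub_scalar (M : 'M[C]_m) a : (M - a%:M)^t* = M^t* - (a^*)%:M.
Proof. by apply/matrixP => i j; rewrite !mxE rmorphB rmorphMn eq_sym. Qed.

Lemma trmxC_invmx (M : 'M[C]_m) : (invmx M)^t* = invmx (M^t*).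
Proof. by rewrite trmx_inv map_invmx. Qed.

Lemma trmxC_unitmx (M : 'M[C]_m) : (M^t* \in unitmx) = (M \in unitmx).
Proof. by rewrite map_unitmx unitmx_tr. Qed.

Lemma dnorm_mulmx_unitary u (U : 'M[C]_m) : U \is unitarymx -> '[u *m U] = '[u].
Proof. by move=> Uu; rewrite dotmx_mulmxl mulmxtVK. Qed.

Lemma dnormE u : '[u] = \sum_j `|u 0 j| ^+ 2.
Proof. by rewrite dotmxE mxE; apply: eq_bigr => j _; rewrite !mxE normCK. Qed.

Lemma dotmx_diagl (c d : 'rV[C]_m) :
  '[c *m diag_mx d, c] = \sum_j d 0 j * `|c 0 j| ^+ 2.
Proof.
rewrite dotmxE mul_mx_diag mxE; apply: eq_bigr => j _.
by rewrite !mxE normCK mulrAC mulrC.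
Qed.

Lemma dnorm_sum_balanced (I : Type) (r : seq I) (c : I -> C) u v :
  \sum_(i <- r) c i = 0 ->
  \sum_(i <- r) '[u + c i *: v] =
    (size r)%:R * '[u] + (\sum_(i <- r) `|c i| ^+ 2) * '[v].
Proof.
move=> c_sum0; under eq_bigr => i _ do rewrite dnormD dnormZ linearZr /=.
rewrite !big_split /= -rmorph_sum -!mulr_suml -rmorph_sum c_sum0 !rmorph0 mul0r.
by rewrite rmorph0 !addr0 big_const_seq count_predT iter_addr_0 mulr_natl.
Qed.

End Dotmx.

Section QuarterTurns.
Variable C : numClosedFieldType.

Definition quarter_turns (s : C) : seq C := [:: s; - s; s * 'i; - (s * 'i)].

Lemma sum_quarter_turns s : \sum_(k <- quarter_turns s) k = 0.
Proof. by rewrite !big_cons big_nil addr0 subrr addr0 subrr. Qed.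

Lemma sum_sqr_quarter_turns s : \sum_(k <- quarter_turns s) - k ^+ 2 = 0.
Proof.
by rewrite !big_cons big_nil !sqrrN exprMn sqrCi mulrN1 opprK addr0 addKr addNr.
Qed.

Lemma norm_quarter_turns s k : k \in quarter_turns s -> `|k| = `|s|.
Proof. by rewrite !inE => /or4P[] /eqP ->; rewrite ?normrN ?normrM ?normCi ?mulr1. Qed.

End QuarterTurns.

Section Gram.
Variables (R : realType) (n : nat).
Local Notation C := R[i].
Implicit Types B : 'M[C]_n.+1.

Lemma adjmxE B : adjmx B = B^t*.
Proof. by rewrite /adjmx map_trmx. Qed.

Lemma gram_hermitian B : B^t* *m B \is hermsymmx.
Proof. by apply/is_hermitianmxP; rewrite expr0 scale1r trmx_mul map_mxM trmxCK. Qed.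

Lemma gram_diagonalization B : exists2 P : 'M[C]_n.+1, P \is unitarymx &
  exists r : 'I_n.+1 -> R, B^t* *m B = P^t* *m diag_mx (\row_i (r i)%:C) *m P.
Proof.
have /orthomx_spectralP gram_spectral := hermitian_normalmx (gram_hermitian B).
have /mxOverP diag_real := hermitian_spectral_diag_real (gram_hermitian B).
exists (spectralmx (B^t* *m B)); first exact: spectral_unitarymx.
exists (fun i => complex.Re (spectral_diag (B^t* *m B) 0 i)).
rewrite -(invmx_unitary (spectral_unitarymx _)) {1}gram_spectral.
by congr (_ *m diag_mx _ *m _); apply/rowP => i; rewrite mxE RRe_real.
Qed.

Section Diagonalized.
Variables (B P : 'M[C]_n.+1) (r : 'I_n.+1 -> R).
Hypotheses (P_unitary : P \is unitarymx)
  (gramE : B^t* *m B = P^t* *m diag_mx (\row_i (r i)%:C) *m P).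

Lemma row_gram_eigen i : row i P *m (B^t* *m B) = (r i)%:C *: row i P.
Proof.
rewrite gramE !mulmxA -row_mul (unitarymxP P_unitary) row1 rowE.
by rewrite -[delta_mx 0 i *m _]rowE row_diag_mx mxE -scalemxAl -rowE.
Qed.

Lemma dnorm_row i : '[row i P] = 1.
Proof. by have /row_unitarymxP -> := P_unitary; rewrite eqxx. Qed.

Lemma dnorm_row_adj i : '[row i P *m B^t*] = (r i)%:C.
Proof.
rewrite dotmx_mulmxr trmxCK -mulmxA row_gram_eigen !dotmxE -scalemxAl mxE -dotmxE.
by rewrite dnorm_row mulr1.
Qed.

Lemma dnorm_unitary_coord x : '[x] = \sum_j `|(x *m P^t*) 0 j| ^+ 2.
Proof.
have Pt_unitary : P^t* \is unitarymx by rewrite trmxC_unitary.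
by rewrite -(dnorm_mulmx_unitary x Pt_unitary) dnormE.
Qed.

Lemma dnorm_mul_adj x :
  '[x *m B^t*] = \sum_j (r j)%:C * `|(x *m P^t*) 0 j| ^+ 2.
Proof.
rewrite dotmx_mulmxr trmxCK -mulmxA gramE !mulmxA dotmx_mulmxl dotmx_diagl.
by under eq_bigr do rewrite mxE.
Qed.

Lemma gram_eigsE : gram_eigs B = range r.
Proof.
apply/seteqP; split=> [x|_ [i _ <-]]; rewrite /gram_eigs /= adjmxE; last first.
  apply/eigenvalueP; exists (row i P); first exact: row_gram_eigen.
  by rewrite -dotmx_eq0 dnorm_row oner_eq0.
move=> /eigenvalueP [v vx v0]; set c := v *m P^t*.
have cx : c *m diag_mx (\row_i (r i)%:C) = x%:C *: c.
  by rewrite /c scalemxAl -vx gramE !mulmxA mulmxtVK.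
have [j cj0] : exists j, c 0 j != 0.
  apply/existsP; apply: contraR v0 => /existsPn c0.
  have {}c0 : c = 0 by apply/rowP => k; rewrite [RHS]mxE; apply/eqP/negPn.
  by apply/eqP; rewrite -(mulmxKtV v P_unitary) // -/c c0 mul0mx.
exists j => //; apply/complexI/(mulfI cj0).
have /rowP/(_ j) := cx; rewrite mul_mx_diag !mxE => ->.
by rewrite mulrC.
Qed.

End Diagonalized.
End Gram.

Section FiniteExtrema.
Variables (R : realType) (T : finType) (i0 : T) (r : T -> R).

Lemma sup_range_finite : exists i, sup (range r) = r i /\ forall j, r j <= r i.
Proof.
have [i _ r_le] : extremum_spec >=%O xpredT r [arg max_(i > i0) r i]%O.
  exact: arg_maxP.
have r_ub : ubound (range r) (r i) by move=> _ [j _ <-]; exact: r_le.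
exists i; split=> [|j]; last exact: r_le.
apply/eqP; rewrite eq_le ge_sup ?ub_le_sup //=.
- by exists (r i).
- by exists i.
- by exists (r i0), i0.
Qed.

Lemma inf_range_finite : exists i, inf (range r) = r i /\ forall j, r i <= r j.
Proof.
have [i _ r_ge] : extremum_spec <=%O xpredT r [arg min_(i < i0) r i]%O.
  exact: arg_minP.
have r_lb : lbound (range r) (r i) by move=> _ [j _ <-]; exact: r_ge.
exists i; split=> [|j]; last exact: r_ge.
apply/eqP; rewrite eq_le lb_le_inf ?ge_inf //=.
- by exists (r i).
- by exists i.
- by exists (r i0), i0.
Qed.

End FiniteExtrema.

Section Rayleigh.
Variables (R : realType) (n : nat) (B : 'M[R[i]]_n.+1).

Lemma dnorm_mul_adj_le_sup x :
  '[x *m B^t*] <= (sup (gram_eigs B))%:C * '[x].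
Proof.
have [P P_unitary [r gramE]] := gram_diagonalization B.
rewrite (gram_eigsE P_unitary gramE); have [i [-> r_le]] := sup_range_finite ord0 r.
rewrite (dnorm_mul_adj gramE) (dnorm_unitary_coord P_unitary) mulr_sumr.
by apply: ler_sum => j _; rewrite ler_wpM2r ?exprn_ge0 // lecR.
Qed.

Lemma dnorm_mul_adj_ge_inf x :
  (inf (gram_eigs B))%:C * '[x] <= '[x *m B^t*].
Proof.
have [P P_unitary [r gramE]] := gram_diagonalization B.
rewrite (gram_eigsE P_unitary gramE); have [i [-> r_ge]] := inf_range_finite ord0 r.
rewrite (dnorm_mul_adj gramE) (dnorm_unitary_coord P_unitary) mulr_sumr.
by apply: ler_sum => j _; rewrite ler_wpM2r ?exprn_ge0 // lecR.
Qed.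

Lemma gram_sup_attained :
  exists2 v, '[v] = 1 & '[v *m B^t*] = (sup (gram_eigs B))%:C.
Proof.
have [P P_unitary [r gramE]] := gram_diagonalization B.
rewrite (gram_eigsE P_unitary gramE); have [i [-> _]] := sup_range_finite ord0 r.
by exists (row i P); [exact: dnorm_row | exact: dnorm_row_adj].
Qed.

Lemma gram_inf_attained :
  exists2 v, '[v] = 1 & '[v *m B^t*] = (inf (gram_eigs B))%:C.
Proof.
have [P P_unitary [r gramE]] := gram_diagonalization B.
rewrite (gram_eigsE P_unitary gramE); have [i [-> _]] := inf_range_finite ord0 r.
by exists (row i P); [exact: dnorm_row | exact: dnorm_row_adj].
Qed.

Lemma sup_gram_ge0 : 0 <= sup (gram_eigs B).
Proof. by have [v _ vB] := gram_sup_attained; rewrite -lecR -vB dotmx_ge0. Qed.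

Lemma inf_gram_ge0 : 0 <= inf (gram_eigs B).
Proof. by have [v _ vB] := gram_inf_attained; rewrite -lecR -vB dotmx_ge0. Qed.

End Rayleigh.

Lemma sub_scalar_unitmx (F : fieldType) m (A : 'M[F]_m) z :
  ~ eigenvalue A z -> A - z%:M \in unitmx.
Proof.
by move=> Az; rewrite -row_free_unit -kermx_eq0; apply: contra_notT Az => ker_neq0.
Qed.

Lemma open_disc_subset (R : realType) (Omega : set R[i]) z0 : open Omega ->
  Omega z0 -> exists2 t : R, 0 < t & forall k, `|k| <= t%:C -> Omega (z0 + k).
Proof.
move=> Omega_open /Omega_open [e /= e_gt0 e_sub].
have e_real : e \is Num.real by apply: gtr0_real.
have Re_gt0 : 0 < complex.Re e by rewrite -ltcR RRe_real.
exists (complex.Re e / 2); first by rewrite divr_gt0.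
move=> k k_le; apply: e_sub; rewrite /ball_ /= opprD addNKr normrN.
by apply: le_lt_trans k_le _; rewrite -[X in _ < X](RRe_real e_real) ltcR; lra.
Qed.

Lemma exists_small_radius (R : realFieldType) (t M : R) : 0 < t -> 0 <= M ->
  exists2 s, 0 < s <= t & M * s ^+ 2 < 1.
Proof.
move=> t_gt0 M_ge0; have M1_gt0 : 0 < M + 1 by lra.
exists (Num.min t (M + 1)^-1); last first.
  have : Num.min t (M + 1)^-1 * (M + 1) <= 1.
    by rewrite -ler_pdivlMr // mul1r ge_min lexx orbT.
  have : 0 < Num.min t (M + 1)^-1 by rewrite lt_min t_gt0 invr_gt0.
  nra.
by rewrite lt_min t_gt0 invr_gt0 M1_gt0 ge_min lexx.
Qed.

Section Perturbation.
Variables (R : realType) (n : nat) (A : 'M[R[i]]_n.+1) (Omega : set R[i]).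
Hypotheses (Omega_open : open Omega) (Omega_regular : Omega `<=` ~` spectrum A).

Local Notation L z := ((A - z%:M)^t*).

Lemma adj_sub_unitmx z : Omega z -> L z \in unitmx.
Proof. by move=> Oz; rewrite trmxC_unitmx sub_scalar_unitmx //; exact: Omega_regular. Qed.

Lemma adj_resolvent z : (resolvent A z)^t* = invmx (L z).
Proof. exact: trmxC_invmx. Qed.

Lemma adj_sub_shift z k : L (z + k^*) = L z - k%:M.
Proof. by rewrite !trmxC_sub_scalar rmorphD /= conjCK raddfD /= opprD addrA. Qed.

Lemma inf_gram_resolvent_dnorm_le z y : Omega z ->
  (inf (gram_eigs (resolvent A z)))%:C * '[y *m L z] <= '[y].
Proof.
move=> Oz; have := dnorm_mul_adj_ge_inf (resolvent A z) (y *m L z).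
by rewrite adj_resolvent mulmxK ?adj_sub_unitmx.
Qed.

Lemma dnorm_le_sup_gram_resolvent z y : Omega z ->
  '[y] <= (sup (gram_eigs (resolvent A z)))%:C * '[y *m L z].
Proof.
move=> Oz; have := dnorm_mul_adj_le_sup (resolvent A z) (y *m L z).
by rewrite adj_resolvent mulmxK ?adj_sub_unitmx.
Qed.

Lemma exists_inf_gram_resolvent_lt z0 : Omega z0 ->
  exists2 z, Omega z &
    inf (gram_eigs (resolvent A z)) < inf (gram_eigs (resolvent A z0)).
Proof.
move=> Oz0; apply: contrapT => no_lt.
set m := inf (gram_eigs (resolvent A z0)).
have m_le z : Omega z -> m <= inf (gram_eigs (resolvent A z)).
  by move=> Oz; rewrite leNgt; apply/negP => lt_m; apply: no_lt; exists z.
have [t t_gt0 disc] := open_disc_subset Omega_open Oz0.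
have t_ge0 : 0 <= t%:C by rewrite ler0c ltW.
have [v v1] := gram_inf_attained (resolvent A z0); rewrite adj_resolvent -/m.
set y := v *m invmx (L z0) => ym.
have yL : y *m L z0 = v by rewrite mulmxKV ?adj_sub_unitmx.
have v_neq0 : v != 0 by rewrite -dotmx_eq0 v1 oner_eq0.
have y_neq0 : y != 0 by apply: contra_neq v_neq0 => y0; rewrite -yL y0 mul0mx.
have m_gt0 : 0 < m by rewrite -ltcR -ym dotmx_gt0.
have key k : `|k| <= t%:C -> '[v + k *: y] <= 1.
  move=> k_le; have Oz : Omega (z0 + (- k)^*).
    by apply: disc; rewrite norm_conjC normrN.
  have yLz : y *m L (z0 + (- k)^*) = v + k *: y.
    by rewrite adj_sub_shift raddfN /= opprK mulmxDr yL mul_mx_scalar.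
  rewrite -(@ler_pM2l _ m%:C) ?ltcR // mulr1 -[X in _ <= X]ym -yLz.
  apply: le_trans _ (inf_gram_resolvent_dnorm_le y Oz).
  by apply: ler_wpM2r; [exact: dotmx_ge0 | rewrite lecR; exact: m_le].
set ks := [:: t%:C; - t%:C].
have ks_sum : \sum_(k <- ks) k = 0 by rewrite !big_cons big_nil addr0 subrr.
have sum_le : \sum_(k <- ks) '[v + k *: y] <= \sum_(k <- ks) 1.
  rewrite !big_seq; apply: ler_sum => k; rewrite !inE => /orP[] /eqP ->;
  by apply: key; rewrite ?normrN ger0_norm.
move: sum_le; rewrite [X in X <= _](dnorm_sum_balanced (c := id) _ _ ks_sum).
rewrite v1 ym !big_cons !big_nil normrN /= ger0_norm // !addr0 mulr1.
rewrite -[1 + 1]/(2%:R : R[i]) gerDl lt_geF //.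
by rewrite mulr_gt0 ?addr_gt0 ?exprn_gt0 ?ltcR.
Qed.

Lemma exists_sup_gram_resolvent_gt z0 : Omega z0 ->
  exists2 z, Omega z &
    sup (gram_eigs (resolvent A z0)) < sup (gram_eigs (resolvent A z)).
Proof.
move=> Oz0; apply: contrapT => no_gt.
set M := sup (gram_eigs (resolvent A z0)).
have le_M z : Omega z -> sup (gram_eigs (resolvent A z)) <= M.
  by move=> Oz; rewrite leNgt; apply/negP => gt_M; apply: no_gt; exists z.
have M_ge0 : 0 <= M := sup_gram_ge0 (resolvent A z0).
have [t t_gt0 disc] := open_disc_subset Omega_open Oz0.
have [s /andP[s_gt0 s_le_t] Ms2_lt1] := exists_small_radius t_gt0 M_ge0.
have s_ge0 : 0 <= s%:C by rewrite ler0c ltW.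
have [v v1] := gram_sup_attained (resolvent A z0); rewrite adj_resolvent -/M.
set y := v *m invmx (L z0) => yM; set p := y *m invmx (L z0).
have yL : y *m L z0 = v by rewrite mulmxKV ?adj_sub_unitmx.
have pL : p *m L z0 = y by rewrite mulmxKV ?adj_sub_unitmx.
have key k : `|k| <= s%:C -> '[y + k *: p] <= M%:C * '[v + (- k ^+ 2) *: p].
  move=> k_le; have Oz : Omega (z0 + k^*).
    by apply: disc; rewrite norm_conjC (le_trans k_le) // lecR.
  have uLz : (y + k *: p) *m L (z0 + k^*) = v + (- k ^+ 2) *: p.
    rewrite adj_sub_shift mulmxBr mulmxDl -scalemxAl pL yL !mul_mx_scalar.
    by rewrite scalerDr opprD addrA addrK scalerA -expr2 scaleNr.
  rewrite -uLz; apply: le_trans (dnorm_le_sup_gram_resolvent _ Oz) _.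
  by apply: ler_wpM2r; [exact: dotmx_ge0 | rewrite lecR; exact: le_M].
set ks := quarter_turns s%:C.
have sum_le : \sum_(k <- ks) '[y + k *: p] <=
              \sum_(k <- ks) M%:C * '[v + (- k ^+ 2) *: p].
  rewrite !big_seq; apply: ler_sum => k /norm_quarter_turns k_norm.
  by apply: key; rewrite k_norm ger0_norm.
move: sum_le; rewrite -mulr_sumr.
rewrite [X in X <= _](dnorm_sum_balanced (c := id) _ _ (sum_quarter_turns _)).
rewrite (dnorm_sum_balanced v p (sum_sqr_quarter_turns _)).
rewrite /= !big_cons !big_nil v1 yM !normrN !normrX !normrN !normrM normCi mulr1.
rewrite ger0_norm // -subr_ge0.
have c_gt0 : 0 < (4 * s ^+ 2 * (1 - M * s ^+ 2))%:C.
  by rewrite ltcR !mulr_gt0 ?exprn_gt0 ?subr_gt0.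
set d := (X in 0 <= X); have -> : d = - ((4 * s ^+ 2 * (1 - M * s ^+ 2))%:C * '[p]).
  by rewrite /d; ring.
rewrite oppr_ge0 pmulr_rle0 // => p_le0.
have p0 : p = 0 by apply/eqP; rewrite -dotmx_eq0 eq_le p_le0 dotmx_ge0.
have v_neq0 : v != 0 by rewrite -dotmx_eq0 v1 oner_eq0.
by move: v_neq0; rewrite -yL -pL p0 !mul0mx eqxx.
Qed.

End Perturbation.

Theorem theorem12 (R : realType) (n : nat) (hn : (0 < n)%N)
    (A : 'M[R[i]]_n) (Omega : set R[i])
    (hOmega : region Omega) (hsub : Omega `<=` ~` spectrum A) :
  (forall z, Omega z ->
     ((s_first (resolvent A z))%:E
        < ereal_sup [set (s_first (resolvent A zeta))%:E | zeta in Omega])%E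
     /\
     (ereal_inf [set (s_last (resolvent A zeta))%:E | zeta in Omega]
        < (s_last (resolvent A z))%:E)%E)
  /\ (exists z1 z2, Omega z1 /\ Omega z2 /\
        s_first (resolvent A z1) <> s_first (resolvent A z2))
  /\ (exists z1 z2, Omega z1 /\ Omega z2 /\
        s_last (resolvent A z1) <> s_last (resolvent A z2)).
Proof.
case: n hn A Omega hOmega hsub => [//|n] _ A Omega [[z0 Oz0] [open_Omega _]] Omega_reg.
have s_first_gt z : Omega z ->
    exists2 z', Omega z' & s_first (resolvent A z) < s_first (resolvent A z').
  move=> Oz; have [z' Oz' lt_sup] := exists_sup_gram_resolvent_gt open_Omega Omega_reg Oz.
  by exists z' => //; rewrite ltr_sqrt // (le_lt_trans (sup_gram_ge0 _) lt_sup).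
have s_last_lt z : Omega z ->
    exists2 z', Omega z' & s_last (resolvent A z') < s_last (resolvent A z).
  move=> Oz; have [z' Oz' lt_inf] := exists_inf_gram_resolvent_lt open_Omega Omega_reg Oz.
  by exists z' => //; rewrite ltr_sqrt // (le_lt_trans (inf_gram_ge0 _) lt_inf).
split; [move=> z Oz; split | split].
- have [z' Oz' lt_z'] := s_first_gt z Oz.
  apply: (@lt_le_trans _ _ (s_first (resolvent A z'))%:E); first by rewrite lte_fin.
  by apply: ereal_sup_ubound; exists z'.
- have [z' Oz' lt_z'] := s_last_lt z Oz.
  apply: (@le_lt_trans _ _ (s_last (resolvent A z'))%:E); last by rewrite lte_fin.
  by apply: ereal_inf_lbound; exists z'.
- have [z' Oz' lt_z'] := s_first_gt z0 Oz0.
  exists z0, z'; split; [exact: Oz0 | split; [exact: Oz' |]].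
  by apply/eqP; rewrite lt_eqF.
- have [z' Oz' lt_z'] := s_last_lt z0 Oz0.
  exists z', z0; split; [exact: Oz' | split; [exact: Oz0 |]].
  by apply/eqP; rewrite lt_eqF.
Qed.
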